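(* Let $\mathbf{W}=\langle W;\to,\neg,{}^{+},{}^{-},1\rangle$ be a quasi-Wajsberg* algebra, $0:=1\to 1$ and $x\wedge y:=\neg(\neg x\vee\neg y)$. Then for any $x,y\in W$: (1) $x\vee 0=0\to x^{+}$ and $x\wedge 0=0\to x^{-}$; (2) $x^{+}\vee 0=0\to x^{+}$, $x^{-}\wedge 0=0\to x^{-}$, $x^{-}\vee 0=0$ and $x^{+}\wedge 0=0$; (3) $x\vee y=\neg(x^{+}\vee y^{+})\to(x^{-}\vee y^{-})$ and $x\wedge y=\neg(x^{+}\wedge y^{+})\to(x^{-}\wedge y^{-})$; (4) $x^{+}\vee x^{-}=0\to x^{+}$ and $x^{+}\wedge x^{-}=0\to x^{-}$; (5) $0\to x=\neg x^{+}\to x^{-}$; (6) $(x\vee y)^{+}=x^{+}\vee y^{+}$, $(x\vee y)^{-}=x^{-}\vee y^{-}$, $(x\wedge y)^{+}=x^{+}\wedge y^{+}$ and $(x\wedge y)^{-}=x^{-}\wedge y^{-}$; (7) $x\vee(x\wedge y)=x\vee x$ and $x\wedge(x\vee y)=x\wedge x$.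
   Context: A quasi-Wajsberg* algebra is an algebra $\langle W;\to,\neg,{}^{+},{}^{-},1\rangle$ of type $\langle2,1,1,1,0\rangle$ such that for all $x,y,z\in W$: (QW*1) $x\to y=\neg y\to\neg x$; (QW*2) $(x\to 1)\to((y\to 1)\to z)=(y\to 1)\to((x\to 1)\to z)$; (QW*3) $(1\to x)\to 1=1$; (QW*4) $(z\to z)\to(x\to y)=x\to y$; (QW*5) $(1\to 1)\to x^{+}=((1\to 1)\to x)^{+}=(x\to 1)\to 1$ and $(1\to 1)\to x^{-}=((1\to 1)\to x)^{-}=(x\to\neg 1)\to\neg 1$; (QW*6) $x\to y=(y^{+}\to x^{-})\to(x^{+}\to y^{-})$; (QW*7) $\neg(x\to y)=y\to x$; (QW*8) $\neg\neg x=x$; (QW*9) $(x\to(\neg x\to y))^{+}=x^{+}\to(\neg x^{+}\to y^{+})$; (QW*10) $x\vee y=y\vee x$; (QW*11) $x\vee(y\vee z)=(x\vee y)\vee z$; (QW*12) $x\to(y\vee z)=(x\to y)\vee(x\to z)$; where $x\vee y:=((x^{+}\to y^{+})^{+}\to(\neg x)^{-})\to((y^{-}\to x^{-})^{-}\to x^{-})$. Conventions: ${}^+,{}^-$ bind tighter than $\neg$, which binds tighter than $\to$, and $\to$ binds tighter than $\vee,\wedge$. *)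

Record QWStar := {
  carrier :> Type;
  imp : carrier -> carrier -> carrier;
  neg : carrier -> carrier;
  pl : carrier -> carrier;
  mi : carrier -> carrier;
  one : carrier;
  qw_join : carrier -> carrier -> carrier :=
    fun x y => imp (imp (pl (imp (pl x) (pl y))) (mi (neg x)))
                   (imp (mi (imp (mi y) (mi x))) (mi x));
  qw1 : forall x y, imp x y = imp (neg y) (neg x);
  qw2 : forall x y z, imp (imp x one) (imp (imp y one) z)
                      = imp (imp y one) (imp (imp x one) z);
  qw3 : forall x, imp (imp one x) one = one;
  qw4 : forall x y z, imp (imp z z) (imp x y) = imp x y;
  qw5a : forall x, imp (imp one one) (pl x) = pl (imp (imp one one) x);
  qw5b : forall x, pl (imp (imp one one) x) = imp (imp x one) one;
  qw5c : forall x, imp (imp one one) (mi x) = mi (imp (imp one one) x);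
  qw5d : forall x, mi (imp (imp one one) x) = imp (imp x (neg one)) (neg one);
  qw6 : forall x y, imp x y = imp (imp (pl y) (mi x)) (imp (pl x) (mi y));
  qw7 : forall x y, neg (imp x y) = imp y x;
  qw8 : forall x, neg (neg x) = x;
  qw9 : forall x y, pl (imp x (imp (neg x) y)) = imp (pl x) (imp (neg (pl x)) (pl y));
  qw10 : forall x y, qw_join x y = qw_join y x;
  qw11 : forall x y z, qw_join x (qw_join y z) = qw_join (qw_join x y) z;
  qw12 : forall x y z, imp x (qw_join y z) = qw_join (imp x y) (imp x z)
}.

Arguments imp {q}. Arguments neg {q}. Arguments pl {q}. Arguments mi {q}.
Arguments one {q}. Arguments qw_join {q}.

Definition qw_zero {W : QWStar} : W := imp one one.
Definition qw_meet {W : QWStar} (x y : W) : W := neg (qw_join (neg x) (neg y)).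

From Stdlib Require Import Setoid.

(* Write 0 for 1 -> 1, pl0 x for (x -> 1) -> 1 and mi0 x for (x -> ~1) -> ~1.
   A prefix 0 -> is absorbed on either side of an implication, and (QW*5) gives
   0 -> x^+ = pl0 x and 0 -> x^- = mi0 x; hence on elements of the form 0 -> w,
   which include all implications, joins and meets, ^+ and ^- are pl0 and mi0.
   These two maps are exchanged by ~, preserve joins and meets by (QW*12) and
   contraposition, and satisfy pl0 pl0 = pl0, mi0 mi0 = mi0 and
   pl0 mi0 = mi0 pl0 = 0.  Once the join is unfolded through pl0 and mi0, each
   identity is a normalization by these rewrite rules; absorption (7) also
   distributes -> over meet. *)

Section QWStarTheory.

Variable W : QWStar.
Implicit Types a b u v w x y z : W.

Local Notation "0" := (@imp W one one).
Local Notation pl0 x := (imp (imp x one) one).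
Local Notation mi0 x := (imp (imp x (neg one)) (neg one)).

Lemma imp0_imp a b : imp 0 (imp a b) = imp a b.
Proof. exact (qw4 W a b one). Qed.

Lemma imp_self z : imp z z = 0.
Proof.
  rewrite <- (qw4 W z z one), <- (qw7 W (imp z z) 0), (qw4 W one one z).
  exact (qw7 W one one).
Qed.

Lemma neg_zero : neg 0 = 0.
Proof. exact (qw7 W one one). Qed.

Lemma imp0_one : imp 0 one = one.
Proof. exact (qw3 W one). Qed.

Lemma one_imp0 : imp one 0 = neg one.
Proof. rewrite <- (qw7 W 0 one), imp0_one. reflexivity. Qed.

Lemma imp0_negone : imp 0 (neg one) = neg one.
Proof. rewrite (qw1 W 0 (neg one)), qw8, neg_zero. exact one_imp0. Qed.

Lemma pl_zero : pl 0 = 0.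
Proof. rewrite <- (imp_self 0) at 1. rewrite qw5b, imp0_one. reflexivity. Qed.

Lemma mi_zero : mi 0 = 0.
Proof. rewrite <- (imp_self 0) at 1. rewrite qw5d, imp0_negone. apply imp_self. Qed.

Lemma imp0_pl x : imp 0 (pl x) = pl0 x.
Proof. rewrite qw5a, qw5b. reflexivity. Qed.

Lemma imp0_mi x : imp 0 (mi x) = mi0 x.
Proof. rewrite qw5c, qw5d. reflexivity. Qed.

Lemma imp_zero_r u : imp u 0 = neg (imp 0 u).
Proof. rewrite qw7. reflexivity. Qed.

Lemma neg_imp0 u : neg (imp 0 u) = imp 0 (neg u).
Proof. rewrite qw7, qw1, neg_zero. reflexivity. Qed.

Lemma imp0_neg_imp a b : imp 0 (neg (imp a b)) = neg (imp a b).
Proof. rewrite qw7. apply imp0_imp. Qed.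

Lemma pl0_neg x : pl0 (neg x) = neg (mi0 x).
Proof.
  rewrite (qw1 W (imp (neg x) one) one), (qw7 W (neg x) one),
    (qw7 W (imp x (neg one)) (neg one)), (qw1 W x (neg one)), qw8.
  reflexivity.
Qed.

Lemma mi0_neg x : mi0 (neg x) = neg (pl0 x).
Proof. rewrite <- (qw8 W (mi0 (neg x))), <- pl0_neg, qw8. reflexivity. Qed.

Lemma imp0_split x : imp 0 x = imp (neg (pl0 x)) (mi0 x).
Proof.
  rewrite (qw6 W 0 x), mi_zero, pl_zero, imp0_mi, imp_zero_r, imp0_pl.
  reflexivity.
Qed.

Lemma join_self w : qw_join w w = imp 0 w.
Proof.
  unfold qw_join.
  rewrite (imp_self (pl w)), (imp_self (mi w)), pl_zero, mi_zero, !imp0_mi, mi0_neg.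
  symmetry; apply imp0_split.
Qed.

Lemma imp_imp0_r u v : imp u (imp 0 v) = imp u v.
Proof. rewrite <- (join_self v), qw12, join_self, imp0_imp. reflexivity. Qed.

Lemma imp_imp0_l u v : imp (imp 0 u) v = imp u v.
Proof.
  rewrite (qw1 W (imp 0 u) v), neg_imp0, imp_imp0_r, (qw1 W u v).
  reflexivity.
Qed.

Lemma pl_normal w : imp 0 w = w -> pl w = pl0 w.
Proof. intro Hw. rewrite <- Hw at 1. apply qw5b. Qed.

Lemma mi_normal w : imp 0 w = w -> mi w = mi0 w.
Proof. intro Hw. rewrite <- Hw at 1. apply qw5d. Qed.

Lemma imp_pl_l u v : imp (pl u) v = imp (pl0 u) v.
Proof. rewrite <- (imp_imp0_l (pl u) v), imp0_pl. reflexivity. Qed.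

Lemma imp_pl_r u v : imp v (pl u) = imp v (pl0 u).
Proof. rewrite <- (imp_imp0_r v (pl u)), imp0_pl. reflexivity. Qed.

Lemma imp_mi_l u v : imp (mi u) v = imp (mi0 u) v.
Proof. rewrite <- (imp_imp0_l (mi u) v), imp0_mi. reflexivity. Qed.

Lemma imp_mi_r u v : imp v (mi u) = imp v (mi0 u).
Proof. rewrite <- (imp_imp0_r v (mi u)), imp0_mi. reflexivity. Qed.

Lemma joinE x y : qw_join x y =
  imp (imp (pl0 (imp (pl0 x) (pl0 y))) (neg (pl0 x)))
      (imp (mi0 (imp (mi0 y) (mi0 x))) (mi0 x)).
Proof.
  unfold qw_join.
  rewrite (imp_pl_l x (pl y)), (imp_pl_r y (pl0 x)).
  rewrite (pl_normal (imp (pl0 x) (pl0 y))) by apply imp0_imp.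
  rewrite (imp_mi_r (neg x)), mi0_neg.
  rewrite (imp_mi_l y (mi x)), (imp_mi_r x (mi0 y)).
  rewrite (mi_normal (imp (mi0 y) (mi0 x))) by apply imp0_imp.
  rewrite (imp_mi_r x). reflexivity.
Qed.

Lemma pl0_mi0 z : pl0 (mi0 z) = 0.
Proof.
  rewrite (qw1 W (imp z (neg one)) (neg one)), qw8, qw7, qw3.
  reflexivity.
Qed.

Lemma mi0_pl0 z : mi0 (pl0 z) = 0.
Proof.
  rewrite <- (qw8 W z) at 1. rewrite pl0_neg, mi0_neg, pl0_mi0, neg_zero.
  reflexivity.
Qed.

Lemma mi0_idem z : mi0 (mi0 z) = mi0 z.
Proof.
  assert (H := imp0_split (mi0 z)).
  rewrite imp0_imp, pl0_mi0, neg_zero, imp0_imp in H.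
  symmetry; exact H.
Qed.

Lemma pl0_idem z : pl0 (pl0 z) = pl0 z.
Proof.
  rewrite <- (qw8 W z) at 1 2.
  rewrite (pl0_neg (neg z)), pl0_neg, mi0_idem. reflexivity.
Qed.

Lemma pl0_pl x : pl0 (pl x) = pl0 x.
Proof. rewrite imp_pl_l. apply pl0_idem. Qed.

Lemma mi0_pl x : mi0 (pl x) = 0.
Proof. rewrite imp_pl_l. apply mi0_pl0. Qed.

Lemma pl0_mi x : pl0 (mi x) = 0.
Proof. rewrite imp_mi_l. apply pl0_mi0. Qed.

Lemma mi0_mi x : mi0 (mi x) = mi0 x.
Proof. rewrite imp_mi_l. apply mi0_idem. Qed.

Lemma pl0_zero : pl0 0 = 0.
Proof. rewrite imp0_one. reflexivity. Qed.

Lemma mi0_zero : mi0 0 = 0.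
Proof. rewrite imp0_negone. apply imp_self. Qed.

(* [imp_self] itself cannot be a rewrite rule: it loops on [0 = imp one one]. *)
Lemma imp_self_neg z : imp (neg z) (neg z) = 0.
Proof. apply imp_self. Qed.

Lemma imp_self_imp a b : imp (imp a b) (imp a b) = 0.
Proof. apply imp_self. Qed.

Hint Rewrite imp0_imp imp0_neg_imp (qw8 W) neg_zero pl0_zero mi0_zero
  pl0_pl mi0_pl pl0_mi mi0_mi pl0_idem mi0_idem pl0_mi0 mi0_pl0 pl0_neg mi0_neg
  imp0_mi imp0_pl imp_zero_r imp_self_neg imp_self_imp : qw_normalize.

Lemma neg_join x y : neg (qw_join x y) = qw_meet (neg x) (neg y).
Proof. unfold qw_meet. rewrite !qw8. reflexivity. Qed.

Lemma imp_meet_r u v w : imp u (qw_meet v w) = qw_meet (imp u v) (imp u w).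
Proof.
  unfold qw_meet. rewrite <- (qw7 W (neg (qw_join (neg v) (neg w))) u).
  rewrite (qw1 W (neg (qw_join (neg v) (neg w))) u), qw8, qw12.
  rewrite <- (qw1 W v u), <- (qw1 W w u), !qw7. reflexivity.
Qed.

Lemma imp_join_l u v w : imp (qw_join v w) u = qw_meet (imp v u) (imp w u).
Proof.
  rewrite (qw1 W (qw_join v w) u), neg_join, imp_meet_r, <- !qw1.
  reflexivity.
Qed.

Lemma imp_meet_l u v w : imp (qw_meet v w) u = qw_join (imp v u) (imp w u).
Proof. unfold qw_meet at 1. rewrite (qw1 W _ u), qw8, qw12, <- !qw1. reflexivity. Qed.

Lemma pl0_join x y : pl0 (qw_join x y) = qw_join (pl0 x) (pl0 y).
Proof. rewrite imp_join_l, imp_meet_l. reflexivity. Qed.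

Lemma mi0_join x y : mi0 (qw_join x y) = qw_join (mi0 x) (mi0 y).
Proof. rewrite imp_join_l, imp_meet_l. reflexivity. Qed.

Lemma pl0_meet x y : pl0 (qw_meet x y) = qw_meet (pl0 x) (pl0 y).
Proof. rewrite imp_meet_l, imp_join_l. reflexivity. Qed.

Lemma mi0_meet x y : mi0 (qw_meet x y) = qw_meet (mi0 x) (mi0 y).
Proof. rewrite imp_meet_l, imp_join_l. reflexivity. Qed.

Lemma join_zero_r w : qw_join w 0 = pl0 w.
Proof. rewrite joinE. autorewrite with qw_normalize. reflexivity. Qed.

Lemma join_zero_l w : qw_join 0 w = pl0 w.
Proof. rewrite qw10. apply join_zero_r. Qed.

Lemma meet_zero_r w : qw_meet w 0 = mi0 w.
Proof. unfold qw_meet. rewrite neg_zero, join_zero_r, pl0_neg, qw8. reflexivity. Qed.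

Lemma meet_zero_l w : qw_meet 0 w = mi0 w.
Proof. unfold qw_meet. rewrite neg_zero, qw10, join_zero_r, pl0_neg, qw8. reflexivity. Qed.

Hint Rewrite join_zero_r join_zero_l meet_zero_r meet_zero_l : qw_normalize.

Lemma join_pl_zero x : qw_join (pl x) 0 = imp 0 (pl x).
Proof. autorewrite with qw_normalize. reflexivity. Qed.

Lemma meet_mi_zero x : qw_meet (mi x) 0 = imp 0 (mi x).
Proof. autorewrite with qw_normalize. reflexivity. Qed.

Lemma join_mi_zero x : qw_join (mi x) 0 = 0.
Proof. autorewrite with qw_normalize. reflexivity. Qed.

Lemma meet_pl_zero x : qw_meet (pl x) 0 = 0.
Proof. autorewrite with qw_normalize. reflexivity. Qed.

Lemma join_pl_mi x : qw_join (pl x) (mi x) = imp 0 (pl x).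
Proof. rewrite joinE. autorewrite with qw_normalize. reflexivity. Qed.

Lemma meet_pl_mi x : qw_meet (pl x) (mi x) = imp 0 (mi x).
Proof. unfold qw_meet. rewrite joinE. autorewrite with qw_normalize. reflexivity. Qed.

Lemma join_split x y :
  qw_join x y = imp (neg (qw_join (pl x) (pl y))) (qw_join (mi x) (mi y)).
Proof. rewrite !joinE. autorewrite with qw_normalize. reflexivity. Qed.

Lemma meet_split x y :
  qw_meet x y = imp (neg (qw_meet (pl x) (pl y))) (qw_meet (mi x) (mi y)).
Proof. unfold qw_meet. rewrite !joinE. autorewrite with qw_normalize. apply qw7. Qed.

Lemma imp0_pl_mi x : imp 0 x = imp (neg (pl x)) (mi x).
Proof.
  rewrite (imp_mi_r x), <- (imp_imp0_l (neg (pl x))), <- neg_imp0, imp0_pl.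
  apply imp0_split.
Qed.

Lemma imp0_join x y : imp 0 (qw_join x y) = qw_join x y.
Proof. apply imp0_imp. Qed.

Lemma imp0_meet x y : imp 0 (qw_meet x y) = qw_meet x y.
Proof. apply imp0_neg_imp. Qed.

Lemma pl_join x y : pl (qw_join x y) = qw_join (pl x) (pl y).
Proof.
  rewrite pl_normal, pl0_join, !joinE by apply imp0_join.
  autorewrite with qw_normalize. reflexivity.
Qed.

Lemma mi_join x y : mi (qw_join x y) = qw_join (mi x) (mi y).
Proof.
  rewrite mi_normal, mi0_join, !joinE by apply imp0_join.
  autorewrite with qw_normalize. reflexivity.
Qed.

Lemma pl_meet x y : pl (qw_meet x y) = qw_meet (pl x) (pl y).
Proof.
  rewrite pl_normal, pl0_meet by apply imp0_meet.
  unfold qw_meet. rewrite !joinE. autorewrite with qw_normalize. reflexivity.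
Qed.

Lemma mi_meet x y : mi (qw_meet x y) = qw_meet (mi x) (mi y).
Proof.
  rewrite mi_normal, mi0_meet by apply imp0_meet.
  unfold qw_meet. rewrite !joinE. autorewrite with qw_normalize. reflexivity.
Qed.

Lemma joinKI_pl x y : qw_join (pl x) (qw_meet (pl x) (pl y)) = pl0 x.
Proof.
  rewrite joinE, pl0_meet, mi0_meet. autorewrite with qw_normalize.
  rewrite imp_meet_r. autorewrite with qw_normalize. reflexivity.
Qed.

Lemma joinKI_mi x y : qw_join (mi x) (qw_meet (mi x) (mi y)) = mi0 x.
Proof.
  rewrite joinE, pl0_meet, mi0_meet. autorewrite with qw_normalize.
  rewrite imp_meet_l. autorewrite with qw_normalize. reflexivity.
Qed.

Lemma joinKI x y : qw_join x (qw_meet x y) = qw_join x x.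
Proof.
  rewrite join_split, join_self, imp0_split, pl_meet, mi_meet, joinKI_pl, joinKI_mi.
  reflexivity.
Qed.

Lemma meetKU x y : qw_meet x (qw_join x y) = qw_meet x x.
Proof. unfold qw_meet at 1. rewrite (neg_join x y), joinKI. reflexivity. Qed.

End QWStarTheory.

Theorem proposition3p5 (W : QWStar) (x y : W) :
  let O := @qw_zero W in
  (* (1) *)
  (qw_join x O = imp O (pl x) /\ qw_meet x O = imp O (mi x)) /\
  (* (2) *)
  (qw_join (pl x) O = imp O (pl x) /\ qw_meet (mi x) O = imp O (mi x) /\
   qw_join (mi x) O = O /\ qw_meet (pl x) O = O) /\
  (* (3) *)
  (qw_join x y = imp (neg (qw_join (pl x) (pl y))) (qw_join (mi x) (mi y)) /\
   qw_meet x y = imp (neg (qw_meet (pl x) (pl y))) (qw_meet (mi x) (mi y))) /\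
  (* (4) *)
  (qw_join (pl x) (mi x) = imp O (pl x) /\ qw_meet (pl x) (mi x) = imp O (mi x)) /\
  (* (5) *)
  (imp O x = imp (neg (pl x)) (mi x)) /\
  (* (6) *)
  (pl (qw_join x y) = qw_join (pl x) (pl y) /\ mi (qw_join x y) = qw_join (mi x) (mi y) /\
   pl (qw_meet x y) = qw_meet (pl x) (pl y) /\ mi (qw_meet x y) = qw_meet (mi x) (mi y)) /\
  (* (7) *)
  (qw_join x (qw_meet x y) = qw_join x x /\ qw_meet x (qw_join x y) = qw_meet x x).
Proof.
  cbv zeta; unfold qw_zero.
  repeat split.
  - rewrite imp0_pl. apply join_zero_r.
  - rewrite imp0_mi. apply meet_zero_r.
  - apply join_pl_zero.
  - apply meet_mi_zero.
  - apply join_mi_zero.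
  - apply meet_pl_zero.
  - apply join_split.
  - apply meet_split.
  - apply join_pl_mi.
  - apply meet_pl_mi.
  - apply imp0_pl_mi.
  - apply pl_join.
  - apply mi_join.
  - apply pl_meet.
  - apply mi_meet.
  - apply joinKI.
  - apply meetKU.
Qed.
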